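(* Let $X \in \{0,1\}$ be binary and let $Y_x$ be a real random variable such that for each $x' \in \{0,1\}$ the conditional cdf of $Y_x$ given $X=x'$ is strictly increasing and continuous on its support. Let $\underline{y}_x < \overline{y}_x$ denote the (possibly infinite) endpoints of the support of $Y_x$, and let $p(y_x) = \Pr(X=1 \mid Y_x = y_x)$. Suppose $p$ is weakly monotonic and not constant on $(\underline{y}_x, \overline{y}_x)$. Then for every $\tau \in (\underline{y}_x,\overline{y}_x)$, $Y_x$ is not $\tau$-cdf independent of $X$.
   Context: $Y_x$ is $\tau$-cdf independent of $X$ if $F_{Y_x \mid X}(\tau \mid 0) = F_{Y_x\mid X}(\tau \mid 1)$, where $F_{Y_x\mid X}(\cdot\mid x')$ denotes the conditional cdf of $Y_x$ given $X = x'$. *)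

From HB Require Import structures.
From mathcomp Require Import all_boot all_order all_algebra.
From mathcomp Require Import all_classical all_reals all_analysis.
Set Implicit Arguments. Unset Strict Implicit. Unset Printing Implicit Defensive.
Import Order.TTheory GRing.Theory Num.Theory.
Local Open Scope classical_set_scope.
Local Open Scope ring_scope.

Definition supp (R : realType) (mu : set R -> \bar R) : set R :=
  [set y : R | forall e : R, 0 < e ->
     let I : set R := `]y - e, y + e[%classic in (0 < mu I)%E].


Definition law (d : measure_display) (T : measurableType d) (R : realType)
  (P : probability T R) (Y : T -> R) : set R -> \bar R :=
  fun B => P (Y @^-1` B).

(* Sub-probability law of Y on the event {X = x'} (proportional to the
   conditional law of Y given X = x', hence with the same support). *)
Definition law_on (d : measure_display) (T : measurableType d) (R : realType)
  (P : probability T R) (X : T -> bool) (Y : T -> R) (x' : bool)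
  : set R -> \bar R :=
  fun B => P (Y @^-1` B `&` X @^-1` [set x']).

Definition supp_lo (d : measure_display) (T : measurableType d) (R : realType)
  (P : probability T R) (Y : T -> R) : \bar R :=
  ereal_inf (EFin @` supp (law P Y)).
Definition supp_hi (d : measure_display) (T : measurableType d) (R : realType)
  (P : probability T R) (Y : T -> R) : \bar R :=
  ereal_sup (EFin @` supp (law P Y)).

Definition cond_cdf (d : measure_display) (T : measurableType d) (R : realType)
  (P : probability T R) (X : T -> bool) (Y : T -> R) (x' : bool) (t : R) : R :=
  fine (P ([set w | Y w <= t] `&` X @^-1` [set x'])) /
  fine (P (X @^-1` [set x'])).

Definition tau_cdf_indep (d : measure_display) (T : measurableType d)
  (R : realType) (P : probability T R) (X : T -> bool) (Y : T -> R) (tau : R)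
  : Prop :=
  cond_cdf P X Y false tau = cond_cdf P X Y true tau.

(* p is a version of y |-> Pr(X = 1 | Y = y): a measurable function with
   P(X = 1, Y in B) = E[p(Y) ; Y in B] for every Borel set B. *)
Definition is_cond_prob_X1 (d : measure_display) (T : measurableType d)
  (R : realType) (P : probability T R) (X : T -> bool) (Y : T -> R)
  (p : R -> R) : Prop :=
  measurable_fun [set: R] p /\
  forall B : set R, measurable B ->
    P (X @^-1` [set true] `&` Y @^-1` B) =
    (\int[P]_(w in Y @^-1` B) (p (Y w))%:E)%E.

From HB Require Import structures.
From mathcomp Require Import all_boot all_order all_algebra.
From mathcomp Require Import all_classical all_reals all_analysis.
From mathcomp Require Import lra measurable_realfun.
Import Order.TTheory GRing.Theory Num.Theory numFieldNormedType.Exports.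
Local Open Scope classical_set_scope.
Local Open Scope ring_scope.
Set Implicit Arguments.
Unset Strict Implicit.
Unset Printing Implicit Defensive.

(* Under tau-cdf independence, P(X = 1, Y <= tau) = P(X = 1) P(Y <= tau), and
   then also P(X = 1, Y > tau) = P(X = 1) P(Y > tau): the averages of p(Y) over
   {Y <= tau} and over {Y > tau} both equal P(X = 1).  If p is nondecreasing on
   the open hull I of the support of Y, the first average is at most p(tau) and
   the second at least p(tau), so both equal p(tau); since both events have
   positive probability, a point z of I with p(z) <> p(tau) would make one of
   the two inequalities strict.  The nonincreasing case is the same argument for
   -p.  The averages only see p on I because Y lies in I almost surely: the
   complement of the support is null, and continuity of the conditional cdfs
   rules out atoms at the endpoints of I. *)

Lemma not_supp_itv0 (R : realType) (mu : set R -> \bar R) s :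
  (forall A, 0 <= mu A)%E -> ~ supp mu s ->
  exists2 e : R, 0 < e & mu `](s - e)%R, (s + e)%R[%classic = 0%E.
Proof.
move=> mu_ge0 nsupp; apply: contrapT => H; apply: nsupp => e e0 /=.
by rewrite lt0e mu_ge0 andbT; apply/eqP => mu0; apply: H; exists e.
Qed.

Section support.
Context (R : realType) (mu : {measure set R -> \bar R}).

Lemma supp_compl_negligible : mu.-negligible (~` supp mu).
Proof.
(* Off the support, every point lies in a null interval with rational
   endpoints, and there are countably many such intervals. *)
pose J (ab : rat * rat) : set R := `]ratr ab.1, ratr ab.2[%classic.
pose F (n : nat) : set R :=
  if unpickle n is Some ab then if mu (J ab) == 0%E then J ab else set0
  else set0.
apply: (negligibleS (A := \bigcup_n F n)); last first.
  apply: negligible_bigcup => n; rewrite /F.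
  case: (unpickle n) => [ab|]; last exact: negligible_set0.
  case: eqP => [mu0|_]; last exact: negligible_set0.
  by apply/negligibleP => //; exact: measurable_itv.
move=> s /= /not_supp_itv0[A|e e0 mue]; first exact: measure_ge0.
have [a] : exists a, ratr a \in `]s - e, s[.
  by apply: rat_in_itvoo; rewrite gtrBl.
have [b] : exists b, ratr b \in `]s, s + e[.
  by apply: rat_in_itvoo; rewrite ltrDl.
rewrite !in_itv /= => /andP[sb bse] /andP[sea as_].
(* Not [=> //], which would try to compute [unpickle (pickle (a, b))]. *)
exists (pickle (a, b)); first by [].
rewrite /F pickleK.
have -> : mu (J (a, b)) = 0%E.
  apply: subset_measure0 mue; try exact: measurable_itv.
  move=> y /=; rewrite !in_itv /= => /andP[ay yb].
  by rewrite (lt_trans sea ay) (lt_trans yb bse).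
by rewrite eqxx /J /= in_itv /= as_ sb.
Qed.

Lemma supp_hull_compl_negligible : (forall y, mu [set y] = 0%E) ->
  mu.-negligible (~` [set y : R |
    (ereal_inf (EFin @` supp mu) < y%:E < ereal_sup (EFin @` supp mu))%E]).
Proof.
set lo := ereal_inf _; set hi := ereal_sup _ => atom0.
have atom_negligible (e : \bar R) : mu.-negligible [set fine e].
  by apply/negligibleP; [exact: measurable_set1|exact: atom0].
apply: (negligibleS (A := ~` supp mu `|` [set fine lo] `|` [set fine hi])).
  move=> y /= /negP; rewrite negb_and -!leNgt.
  have [sy /orP[ylo|hiy]|nsy _] := pselect (supp mu y); last by left; left.
  - left; right; suff -> : lo = y%:E by [].
    by apply/eqP; rewrite eq_le ylo ereal_inf_lbound //; exists y.
  - right; suff -> : hi = y%:E by [].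
    by apply/eqP; rewrite eq_le hiy ereal_sup_ubound //; exists y.
by apply: negligibleU; [apply: negligibleU|];
  [exact: supp_compl_negligible|exact: atom_negligible|exact: atom_negligible].
Qed.

Lemma supp_inf_lt_measure_gt0 z : (ereal_inf (EFin @` supp mu) < z%:E)%E ->
  (0 < mu `]-oo, z]%classic)%E.
Proof.
move=> /ereal_inf_lt[_ [s supp_s <-]]; rewrite lte_fin => sz.
have /= := supp_s (z - s); rewrite subr_gt0 => /(_ sz) /lt_le_trans; apply.
apply: le_measure; rewrite ?inE; try exact: measurable_itv.
by move=> y /=; rewrite !in_itv /= addrCA subrr addr0 => /andP[_ /ltW].
Qed.

Lemma supp_sup_gt_measure_gt0 z : (z%:E < ereal_sup (EFin @` supp mu))%E ->
  (0 < mu `]z, +oo[%classic)%E.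
Proof.
move=> /ereal_sup_gt[_ [s supp_s <-]]; rewrite lte_fin => zs.
have /= := supp_s (s - z); rewrite subr_gt0 => /(_ zs) /lt_le_trans; apply.
apply: le_measure; rewrite ?inE; try exact: measurable_itv.
by move=> y /=; rewrite !in_itv /= andbT opprB addrCA subrr addr0 => /andP[].
Qed.

End support.

Lemma continuous_left_gap (R : realType) (f : R -> R) (l eta : R) :
  {for l, continuous f} -> (forall t, t < l -> f t <= f l - eta) -> eta <= 0.
Proof.
move=> cf fle; suff : f l <= f l - eta by lra.
apply: (closed_cvg _ (@closed_le _ (f l - eta)) _ _ (cvg_at_left_filter cf)).
near=> t; apply: fle; near: t; exact: nbhs_left_lt.
Unshelve. all: by end_near.
Qed.

Section additive_split.
Context (R : realType).

Definition additive_on_measurable (f : set R -> R) := forall A B,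
  measurable A -> measurable B -> A `&` B = set0 -> f (A `|` B) = f A + f B.

Lemma additive_split_le (f : set R -> R) (z tau : R) :
  additive_on_measurable f -> z <= tau ->
  f `]-oo, tau]%classic = f `]-oo, z]%classic + f `]z, tau]%classic.
Proof.
move=> f_add ztau; rewrite -f_add; try exact: measurable_itv.
  by rewrite -itv_bndbnd_setU //= bnd_simp.
apply/eqP/lt_disjoint => x y; rewrite !in_itv /= => xz /andP[zy _].
exact: le_lt_trans zy.
Qed.

Lemma additive_split_gt (f : set R -> R) (z tau : R) :
  additive_on_measurable f -> tau <= z ->
  f `]tau, +oo[%classic = f `]tau, z]%classic + f `]z, +oo[%classic.
Proof.
move=> f_add tauz; rewrite -f_add; try exact: measurable_itv.
  by rewrite -itv_bndbnd_setU //= bnd_simp.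
apply/eqP/lt_disjoint => x y; rewrite !in_itv /= andbT => /andP[_ xz] zy.
exact: le_lt_trans zy.
Qed.

End additive_split.

Section monotone_density.
Variables (R : realType) (mu nu : set R -> R) (p : R -> R) (I : set R).

Hypotheses (mu_additive : additive_on_measurable mu)
  (nu_additive : additive_on_measurable nu).
Hypothesis nu_le : forall B k, measurable B ->
  (forall y, B y -> I y -> p y <= k) -> nu B <= k * mu B.
Hypothesis nu_ge : forall B k, measurable B ->
  (forall y, B y -> I y -> k <= p y) -> k * mu B <= nu B.
Hypothesis mu_le_gt0 : forall z, I z -> 0 < mu `]-oo, z]%classic.
Hypothesis mu_gt_gt0 : forall z, I z -> 0 < mu `]z, +oo[%classic.
Hypothesis p_nondecreasing : forall a b, I a -> I b -> a <= b -> p a <= p b.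

Lemma density_le_left tau : I tau ->
  nu `]-oo, tau]%classic <= p tau * mu `]-oo, tau]%classic.
Proof.
move=> Itau; apply: nu_le; first exact: measurable_itv.
by move=> y; rewrite /= in_itv /= => ytau Iy; exact: p_nondecreasing.
Qed.

Lemma density_ge_right tau : I tau ->
  p tau * mu `]tau, +oo[%classic <= nu `]tau, +oo[%classic.
Proof.
move=> Itau; apply: nu_ge; first exact: measurable_itv.
by move=> y; rewrite /= in_itv /= andbT => /ltW tauy Iy; exact: p_nondecreasing.
Qed.

Lemma density_lt_left tau z : I tau -> I z -> p z < p tau ->
  nu `]-oo, tau]%classic < p tau * mu `]-oo, tau]%classic.
Proof.
move=> Itau Iz pz_lt.
have ztau : z <= tau.
  rewrite leNgt; apply/negP => /ltW/(p_nondecreasing Itau Iz).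
  by rewrite leNgt pz_lt.
rewrite (additive_split_le nu_additive ztau).
rewrite (additive_split_le mu_additive ztau) mulrDr.
have nu_left := density_le_left Iz.
have nu_mid : nu `]z, tau]%classic <= p tau * mu `]z, tau]%classic.
  apply: nu_le; first exact: measurable_itv.
  by move=> y; rewrite /= in_itv /= => /andP[_ ytau] Iy; exact: p_nondecreasing.
have := mu_le_gt0 Iz; nra.
Qed.

Lemma density_gt_right tau z : I tau -> I z -> p tau < p z ->
  p tau * mu `]tau, +oo[%classic < nu `]tau, +oo[%classic.
Proof.
move=> Itau Iz pz_gt.
have tauz : tau <= z.
  rewrite leNgt; apply/negP => /ltW/(p_nondecreasing Iz Itau).
  by rewrite leNgt pz_gt.
rewrite (additive_split_gt nu_additive tauz).
rewrite (additive_split_gt mu_additive tauz) mulrDr.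
have nu_right := density_ge_right Iz.
have nu_mid : p tau * mu `]tau, z]%classic <= nu `]tau, z]%classic.
  apply: nu_ge; first exact: measurable_itv.
  move=> y; rewrite /= in_itv /= => /andP[/ltW tauy _] Iy.
  exact: p_nondecreasing.
have := mu_gt_gt0 Iz; nra.
Qed.

Lemma density_cst_of_split_ratio tau q : I tau ->
  nu `]-oo, tau]%classic = q * mu `]-oo, tau]%classic ->
  nu `]tau, +oo[%classic = q * mu `]tau, +oo[%classic ->
  forall z, I z -> p z = p tau.
Proof.
move=> Itau nuL nuU.
have q_ptau : q = p tau.
  have := density_le_left Itau; have := density_ge_right Itau.
  have := mu_le_gt0 Itau; have := mu_gt_gt0 Itau; rewrite nuL nuU; nra.
move=> z Iz; case: (ltgtP (p z) (p tau)) => // [pz_lt|pz_gt].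
  by have := density_lt_left Itau Iz pz_lt; rewrite nuL q_ptau ltxx.
by have := density_gt_right Itau Iz pz_gt; rewrite nuU q_ptau ltxx.
Qed.

End monotone_density.

Section real_probability.
Context d (T : measurableType d) (R : realType) (P : probability T R).

Definition pr (A : set T) : R := fine (P A).

Lemma prE A : measurable A -> P A = (pr A)%:E.
Proof. by move=> mA; rewrite /pr fineK // fin_num_measure. Qed.

Lemma pr_ge0 A : 0 <= pr A.
Proof. by rewrite /pr fine_ge0 // measure_ge0. Qed.

Lemma le_pr A B : measurable A -> measurable B -> A `<=` B -> pr A <= pr B.
Proof. by move=> mA mB AB; rewrite -lee_fin -!prE // le_measure // inE. Qed.

Lemma prU A B : measurable A -> measurable B -> A `&` B = set0 ->
  pr (A `|` B) = pr A + pr B.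
Proof.
move=> mA mB AB0; apply/eqP; rewrite -eqe EFinD -!prE //.
  by rewrite measureU.
exact: measurableU.
Qed.

Lemma prT : pr setT = 1.
Proof. by rewrite /pr probability_setT. Qed.

Lemma pr_gt0 A : measurable A -> (0 < P A)%E -> 0 < pr A.
Proof. by move=> mA; rewrite prE // lte_fin. Qed.

End real_probability.

Section integral_bounds.
Context d (T : measurableType d) (R : realType).
Variables (mu : {measure set T -> \bar R}) (D : set T).
Hypothesis mD : measurable D.

Lemma le_integral_measurable (f g : T -> \bar R) :
  measurable_fun D f -> measurable_fun D g -> (forall x, D x -> f x <= g x)%E ->
  (\int[mu]_(x in D) f x <= \int[mu]_(x in D) g x)%E.
Proof.
move=> mf mg fg; have {}fg : {in D, forall x, f x <= g x}%E.
  by move=> x /set_mem; exact: fg.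
rewrite integralE [leRHS]integralE leeB //.
- apply: ge0_le_integral => //; [exact: measurable_funepos..|].
  by move=> x /mem_set; exact: funepos_le.
- apply: ge0_le_integral => //; [exact: measurable_funeneg..|].
  by move=> x /mem_set; exact: funeneg_le.
Qed.

Lemma integral_le_cst (f : T -> R) k : measurable_fun D f ->
  (forall x, D x -> f x <= k) -> (\int[mu]_(x in D) (f x)%:E <= k%:E * mu D)%E.
Proof.
move=> mf fk; rewrite -integral_cst //.
by apply: le_integral_measurable => //; exact/measurable_EFinP.
Qed.

Lemma integral_ge_cst (f : T -> R) k : measurable_fun D f ->
  (forall x, D x -> k <= f x) -> (k%:E * mu D <= \int[mu]_(x in D) (f x)%:E)%E.
Proof.
move=> mf kf; rewrite -integral_cst //.
by apply: le_integral_measurable => //; exact/measurable_EFinP.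
Qed.

End integral_bounds.

Definition supp_itv d (T : measurableType d) (R : realType)
  (P : probability T R) (Y : T -> R) : set R :=
  [set y | (supp_lo P Y < y%:E < supp_hi P Y)%E].

Section conditional_law.
Context d (T : measurableType d) (R : realType) (P : probability T R)
  (X : T -> bool) (Y : {mfun T >-> R}).
Hypothesis mX : forall b, measurable (X @^-1` [set b]).
Hypothesis posX : forall b, (0 < P (X @^-1` [set b]))%E.

Let mY B : measurable B -> measurable (Y @^-1` B).
Proof. exact: measurable_funPTI. Qed.

Let mYX B b : measurable B -> measurable (Y @^-1` B `&` X @^-1` [set b]).
Proof. by move=> mB; apply: measurableI; [exact: mY|exact: mX]. Qed.

Let cdf_set t : [set w | Y w <= t] = Y @^-1` `]-oo, t]%classic.
Proof. by apply/seteqP; split => w /=; rewrite in_itv. Qed.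

Lemma cond_cdfE b t : cond_cdf P X Y b t =
  pr P (Y @^-1` `]-oo, t]%classic `&` X @^-1` [set b]) /
  pr P (X @^-1` [set b]).
Proof. by rewrite /cond_cdf cdf_set. Qed.

Lemma cond_cdf_jump b t y : t < y ->
  cond_cdf P X Y b t <= cond_cdf P X Y b y -
    pr P (Y @^-1` [set y] `&` X @^-1` [set b]) / pr P (X @^-1` [set b]).
Proof.
move=> ty; rewrite !cond_cdfE -mulrBl ler_pM2r ?invr_gt0 ?pr_gt0 //.
have m_le s : measurable (Y @^-1` `]-oo, s]%classic `&` X @^-1` [set b]).
  by apply: mYX; exact: measurable_itv.
have m_atom : measurable (Y @^-1` [set y] `&` X @^-1` [set b]).
  by apply: mYX; exact: measurable_set1.
rewrite lerBrDr -prU //.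
- apply: le_pr => //; first exact: measurableU.
  move=> w /= [[wt ->]|[-> ->]]; split => //; rewrite in_itv /= ?lexx //.
  by move: wt; rewrite in_itv /= => /le_trans; apply; exact: ltW.
- apply/seteqP; split => w //= [[]]; rewrite in_itv /= => wt _ [wy _].
  by move: ty; rewrite -wy ltNge wt.
Qed.

Hypothesis cont : forall (b : bool) (y : R), supp (law_on P X Y b) y ->
  {for y, continuous (cond_cdf P X Y b : R -> R)}.

Lemma law_on_atom0 b y : P (Y @^-1` [set y] `&` X @^-1` [set b]) = 0%E.
Proof.
have m_atom : measurable (Y @^-1` [set y] `&` X @^-1` [set b]).
  by apply: mYX; exact: measurable_set1.
(* At a support point the atom is a jump of a continuous cdf; elsewhere it
   lies in a null interval. *)
have [supp_y|] := pselect (supp (law_on P X Y b) y).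
  have := continuous_left_gap (cont supp_y) (fun t => @cond_cdf_jump b t y).
  rewrite ler_pdivrMr ?pr_gt0 // mul0r => atom_le0.
  by rewrite prE //; congr (_%:E); apply/le_anti; rewrite atom_le0 pr_ge0.
move=> /not_supp_itv0[A|e e0 law0]; first exact: measure_ge0.
apply: subset_measure0 law0 => //; first by apply: mYX; exact: measurable_itv.
move=> w /= [-> ->]; split => //; rewrite in_itv /=.
by rewrite gtrBl ltrDl e0.
Qed.

Lemma law_atom0 y : P (Y @^-1` [set y]) = 0%E.
Proof.
apply/negligibleP; first by apply: mY; exact: measurable_set1.
apply: (negligibleS (A := (Y @^-1` [set y] `&` X @^-1` [set false]) `|`
                          (Y @^-1` [set y] `&` X @^-1` [set true]))).
  by move=> w /= ->; case: (X w); [right|left].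
have m_atom b : measurable (Y @^-1` [set y] `&` X @^-1` [set b]).
  by apply: mYX; exact: measurable_set1.
by apply: negligibleU; apply/negligibleP => //; exact: law_on_atom0.
Qed.

Lemma measurable_supp_itv : measurable (supp_itv P Y).
Proof.
have -> : supp_itv P Y = EFin @^-1` `](supp_lo P Y), (supp_hi P Y)[%classic.
  by apply/seteqP; split => y; rewrite /= in_itv.
rewrite -[A in measurable A]setTI.
exact: EFin_measurable (emeasurable_itv _).
Qed.

Lemma supp_itv_compl_null : P (Y @^-1` ~` supp_itv P Y) = 0%E.
Proof.
have := @supp_hull_compl_negligible _ (distribution P Y) law_atom0.
by move/negligibleP; apply; apply: measurableC; exact: measurable_supp_itv.
Qed.

Variable p : R -> R.
Hypothesis hp : is_cond_prob_X1 P X Y p.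

Let I := supp_itv P Y.
Let mu (B : set R) := pr P (Y @^-1` B).
Let nu (B : set R) := pr P (Y @^-1` B `&` X @^-1` [set true]).

Let mI : measurable I := measurable_supp_itv.

Let measureI_supp_itv A : measurable A -> P (A `&` Y @^-1` I) = P A.
Proof.
move=> mA; rewrite [RHS](measureDI P mA (mY mI)).
rewrite [X in (X + _)%E](_ : _ = 0%E) ?add0e //.
apply: subset_measure0 supp_itv_compl_null => //.
  by apply: measurableD => //; exact: mY.
by apply: mY; exact: measurableC.
Qed.

Let muE B : measurable B -> (mu B)%:E = P (Y @^-1` (B `&` I)).
Proof.
by move=> mB; rewrite -prE ?preimage_setI ?measureI_supp_itv //; exact: mY.
Qed.

Let nuE B : measurable B ->
  (nu B)%:E = (\int[P]_(w in Y @^-1` (B `&` I)) (p (Y w))%:E)%E.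
Proof.
move=> mB; have [_ <-] := hp; last exact: measurableI.
rewrite -prE; last exact: mYX.
by rewrite -(measureI_supp_itv (mYX true mB)) setIAC setIC preimage_setI.
Qed.

Let mpY (D : set T) : measurable_fun D (fun w => p (Y w)).
Proof. by apply: measurable_funTS; apply: measurableT_comp (hp.1) _. Qed.

Lemma cond_prob_le B k : measurable B ->
  (forall y, B y -> I y -> p y <= k) -> nu B <= k * mu B.
Proof.
move=> mB pk; rewrite -lee_fin EFinM nuE // muE //.
apply: integral_le_cst; first by apply: mY; exact: measurableI.
  exact: mpY.
by move=> w [By Iy]; exact: pk.
Qed.

Lemma cond_prob_ge B k : measurable B ->
  (forall y, B y -> I y -> k <= p y) -> k * mu B <= nu B.
Proof.
move=> mB kp; rewrite -lee_fin EFinM nuE // muE //.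
apply: integral_ge_cst; first by apply: mY; exact: measurableI.
  exact: mpY.
by move=> w [By Iy]; exact: kp.
Qed.

Let mu_additive : additive_on_measurable mu.
Proof.
move=> A B mA mB AB0; rewrite /mu preimage_setU prU //; try exact: mY.
by rewrite -preimage_setI AB0 preimage_set0.
Qed.

Let nu_additive : additive_on_measurable nu.
Proof.
move=> A B mA mB AB0; rewrite /nu preimage_setU setIUl prU //; try exact: mYX.
by rewrite -setIIl -preimage_setI AB0 preimage_set0 set0I.
Qed.

Let mu_le_gt0 z : I z -> 0 < mu `]-oo, z]%classic.
Proof.
move=> /andP[loz _]; apply: pr_gt0; first by apply: mY; exact: measurable_itv.
exact: (@supp_inf_lt_measure_gt0 _ (distribution P Y)).
Qed.

Let mu_gt_gt0 z : I z -> 0 < mu `]z, +oo[%classic.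
Proof.
move=> /andP[_ zhi]; apply: pr_gt0; first by apply: mY; exact: measurable_itv.
exact: (@supp_sup_gt_measure_gt0 _ (distribution P Y)).
Qed.

Let q := pr P (X @^-1` [set true]).

Lemma tau_cdf_indep_split tau : tau_cdf_indep P X Y tau ->
  nu `]-oo, tau]%classic = q * mu `]-oo, tau]%classic /\
  nu `]tau, +oo[%classic = q * mu `]tau, +oo[%classic.
Proof.
set L := `]-oo, tau]%classic; set U := `]tau, +oo[%classic.
have mL : measurable L by exact: measurable_itv.
have mU : measurable U by exact: measurable_itv.
have split_X A : measurable A ->
    pr P (A `&` X @^-1` [set false]) + pr P (A `&` X @^-1` [set true]) = pr P A.
  move=> mA; rewrite -prU; try by apply: measurableI.
    congr (pr P _); rewrite -setIUr -preimage_setU.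
    apply/setIidPl => w _.
    by rewrite /preimage /=; case: (X w); [right|left].
  by apply/seteqP; split => w // [[_ /= ->] []].
have q_false : pr P (X @^-1` [set false]) = 1 - q.
  by have := split_X _ measurableT; rewrite !setTI prT /q => <-; lra.
have q_gt0 : 0 < q by exact: pr_gt0.
have q_lt1 : 0 < 1 - q by rewrite -q_false; exact: pr_gt0.
have LU : L `|` U = setT by rewrite -itv_bndbnd_setU ?set_itvNyy.
have LU0 : L `&` U = set0.
  by apply/eqP/lt_disjoint => x y; rewrite !in_itv /= andbT; exact: le_lt_trans.
rewrite /tau_cdf_indep !cond_cdfE q_false -/q => /eqP.
rewrite eqr_div ?lt0r_neq0 // => /eqP indep.
have mu_L := split_X _ (mY mL); rewrite -/(mu L) -/(nu L) in mu_L indep.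
have nuL : nu L = q * mu L by rewrite -mu_L; nra.
have mu_T : mu L + mu U = 1.
  by rewrite -mu_additive // LU /mu preimage_setT prT.
have nu_T : nu L + nu U = q.
  by rewrite -nu_additive // LU /nu preimage_setT setTI.
split => //; have -> : mu U = 1 - mu L by lra.
by rewrite mulrBr mulr1; lra.
Qed.

Lemma cond_prob_cst_of_nondecreasing tau :
  (forall a b, I a -> I b -> a <= b -> p a <= p b) -> I tau ->
  tau_cdf_indep P X Y tau -> forall z, I z -> p z = p tau.
Proof.
move=> p_nd Itau /tau_cdf_indep_split[nuL nuU].
exact: (density_cst_of_split_ratio mu_additive nu_additive cond_prob_le
  cond_prob_ge mu_le_gt0 mu_gt_gt0 p_nd Itau nuL nuU).
Qed.

Lemma cond_prob_cst_of_nonincreasing tau :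
  (forall a b, I a -> I b -> a <= b -> p b <= p a) -> I tau ->
  tau_cdf_indep P X Y tau -> forall z, I z -> p z = p tau.
Proof.
move=> p_ni Itau /tau_cdf_indep_split[nuL nuU] z Iz; apply: oppr_inj.
(* The nondecreasing case for -p, with the signed set function -nu. *)
have Nnu_additive : additive_on_measurable (fun B => - nu B).
  by move=> A B mA mB AB0; rewrite nu_additive // opprD.
have Nnu_le B k : measurable B -> (forall y, B y -> I y -> - p y <= k) ->
    - nu B <= k * mu B.
  move=> mB pk; rewrite lerNl -mulNr; apply: cond_prob_ge => // y By Iy.
  by rewrite lerNl; exact: pk.
have Nnu_ge B k : measurable B -> (forall y, B y -> I y -> k <= - p y) ->
    k * mu B <= - nu B.
  move=> mB kp; rewrite lerNr -mulNr; apply: cond_prob_le => // y By Iy.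
  by rewrite lerNr; exact: kp.
have Np_nd a b : I a -> I b -> a <= b -> - p a <= - p b.
  by move=> Ia Ib ab; rewrite lerN2; exact: p_ni.
have NnuL : - nu `]-oo, tau]%classic = - q * mu `]-oo, tau]%classic.
  by rewrite nuL mulNr.
have NnuU : - nu `]tau, +oo[%classic = - q * mu `]tau, +oo[%classic.
  by rewrite nuU mulNr.
exact: (density_cst_of_split_ratio mu_additive Nnu_additive Nnu_le Nnu_ge
  mu_le_gt0 mu_gt_gt0 Np_nd Itau NnuL NnuU Iz).
Qed.

End conditional_law.

Unset Implicit Arguments.
Set Strict Implicit.

Theorem corollary1 (d : measure_display) (T : measurableType d) (R : realType)
  (P : probability T R) (X : T -> bool) (Y : {mfun T >-> R}) (p : R -> R)
  (mX : forall b : bool, measurable (X @^-1` [set b]))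
  (posX : forall b : bool, (0 < P (X @^-1` [set b]))%E)
  (cont : forall (x' : bool) (y : R), supp (law_on P X Y x') y ->
     {for y, continuous (cond_cdf P X Y x' : R -> R)})
  (incr : forall (x' : bool) (a b : R),
     supp (law_on P X Y x') a -> supp (law_on P X Y x') b -> a < b ->
     cond_cdf P X Y x' a < cond_cdf P X Y x' b)
  (hp : is_cond_prob_X1 P X Y p)
  (mono : (forall a b : R,
             (supp_lo P Y < a%:E < supp_hi P Y)%E ->
             (supp_lo P Y < b%:E < supp_hi P Y)%E -> a <= b -> p a <= p b)
       \/ (forall a b : R,
             (supp_lo P Y < a%:E < supp_hi P Y)%E ->
             (supp_lo P Y < b%:E < supp_hi P Y)%E -> a <= b -> p b <= p a))
  (noncst : exists a b : R,
       (supp_lo P Y < a%:E < supp_hi P Y)%E /\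
       (supp_lo P Y < b%:E < supp_hi P Y)%E /\ p a <> p b) :
  forall tau : R, (supp_lo P Y < tau%:E < supp_hi P Y)%E ->
    ~ tau_cdf_indep P X Y tau.
Proof.
move=> tau Itau indep; have [a [b [Ia [Ib]]]] := noncst; apply.
have p_cst : forall z, supp_itv P Y z -> p z = p tau.
  case: mono => mono.
  - exact: (cond_prob_cst_of_nondecreasing mX posX cont hp mono Itau indep).
  - exact: (cond_prob_cst_of_nonincreasing mX posX cont hp mono Itau indep).
by rewrite (p_cst a Ia) (p_cst b Ib).
Qed.
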